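(* Consider the mass-action system in the concentrations $x_1,\dots,x_6$ with positive reaction rate constants $k_1,\dots,k_6$: \[ \begin{aligned} \dot x_1&=-k_1x_1+k_4x_3x_5, & \dot x_2&=k_1x_1-k_2x_2+k_5x_4x_5, & \dot x_3&=k_2x_2-k_3x_3-k_4x_3x_5,\\ \dot x_4&=k_3x_3-k_5x_4x_5, & \dot x_5&=-k_4x_3x_5-k_5x_4x_5+k_6x_6, & \dot x_6&=k_4x_3x_5+k_5x_4x_5-k_6x_6, \end{aligned} \] together with the conservation laws $x_1+x_2+x_3+x_4=T_1$, $x_5+x_6=T_2$, with $T_1,T_2>0$. Assume that a fixed choice of reaction rate constants satisfies $k_3>k_1$. Then $k_6\left(\frac{1}{k_2}+\frac{1}{k_3}\right)<k_6\left(\frac{1}{k_1}+\frac{1}{k_2}\right)$, and for any choice of total concentration constants $T_1,T_2>0$ verifying \[ k_6\left(\frac{1}{k_2}+\frac{1}{k_3}\right)<\frac{T_1}{T_2}<k_6\left(\frac{1}{k_1}+\frac{1}{k_2}\right), \] there exist positive constants $N_1,N_2$ such that for any values $\beta_4,\beta_5>0$ with $\beta_4>N_1$ and $\frac{\beta_5}{\beta_4}>N_2$, after replacing $k_4$ by $\overline{k_4}=\beta_4k_4$ and $k_5$ by $\overline{k_5}=\beta_5k_5$ (keeping $k_1,k_2,k_3,k_6,T_1,T_2$ unchanged), the system has at least three positive steady states, i.e. there are at least three points $x\in\mathbb R^6_{>0}$ with $\dot x_1=\dots=\dot x_6=0$, $x_1+x_2+x_3+x_4=T_1$ and $x_5+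x_6=T_2$.
   Context: This is the mass-action system of the chemical reaction network $X_1\xrightarrow{k_1}X_2\xrightarrow{k_2}X_3\xrightarrow{k_3}X_4$, $X_3+X_5\xrightarrow{k_4}X_1+X_6$, $X_4+X_5\xrightarrow{k_5}X_2+X_6$, $X_6\xrightarrow{k_6}X_5$ (a two-component system with hybrid histidine kinase); $x_i$ is the concentration of species $X_i$. A positive steady state is a point of $\mathbb R^6_{>0}$ where the right-hand sides vanish. *)

From Stdlib Require Import Reals.
Open Scope R_scope.

Record state := mkState { x1 : R; x2 : R; x3 : R; x4 : R; x5 : R; x6 : R }.

Definition f1 (k1 k2 k3 k4 k5 k6 : R) (x : state) : R :=
  - k1 * x1 x + k4 * x3 x * x5 x.
Definition f2 (k1 k2 k3 k4 k5 k6 : R) (x : state) : R :=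
  k1 * x1 x - k2 * x2 x + k5 * x4 x * x5 x.
Definition f3 (k1 k2 k3 k4 k5 k6 : R) (x : state) : R :=
  k2 * x2 x - k3 * x3 x - k4 * x3 x * x5 x.
Definition f4 (k1 k2 k3 k4 k5 k6 : R) (x : state) : R :=
  k3 * x3 x - k5 * x4 x * x5 x.
Definition f5 (k1 k2 k3 k4 k5 k6 : R) (x : state) : R :=
  - k4 * x3 x * x5 x - k5 * x4 x * x5 x + k6 * x6 x.
Definition f6 (k1 k2 k3 k4 k5 k6 : R) (x : state) : R :=
  k4 * x3 x * x5 x + k5 * x4 x * x5 x - k6 * x6 x.

Definition pos_steady_state (k1 k2 k3 k4 k5 k6 T1 T2 : R) (x : state) : Prop :=
  0 < x1 x /\ 0 < x2 x /\ 0 < x3 x /\ 0 < x4 x /\ 0 < x5 x /\ 0 < x6 x /\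
  f1 k1 k2 k3 k4 k5 k6 x = 0 /\ f2 k1 k2 k3 k4 k5 k6 x = 0 /\
  f3 k1 k2 k3 k4 k5 k6 x = 0 /\ f4 k1 k2 k3 k4 k5 k6 x = 0 /\
  f5 k1 k2 k3 k4 k5 k6 x = 0 /\ f6 k1 k2 k3 k4 k5 k6 x = 0 /\
  x1 x + x2 x + x3 x + x4 x = T1 /\ x5 x + x6 x = T2.

From Stdlib Require Import Reals Lra Psatz.
Open Scope R_scope.

(* At a steady state x6 = T2 - x5, and the equations f1, f3, f4, f5 determine
   x1, ..., x4 rationally in z = x5.  The remaining conservation law
   x1 + x2 + x3 + x4 = T1 becomes, after clearing the denominator
   z (K4 z + k3), the cubic equation steady_poly z = 0.  This cubic is
   positive at 0 and negative at T2.  When T1/T2 lies in the window, it is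
   positive at a fixed point b once K4 is large, and negative at a point of
   order 1/K4 once moreover K4/K5 is small; the intermediate value theorem
   then gives three roots in (0, T2), hence three steady states. *)

Definition steady_poly (k1 k2 k3 K4 K5 k6 T1 T2 z : R) : R :=
  k6 * (T2 - z) * (K4 * (/ k1 + / k2) * z ^ 2 + (k3 / k2 + 1) * z + k3 / K5)
  - T1 * (K4 * z + k3) * z.

Definition steady_state_of_x5 (k1 k2 k3 K4 K5 k6 T2 z : R) : state :=
  let y3 := k6 * (T2 - z) / (K4 * z + k3) in
  mkState (K4 * y3 * z / k1) (y3 * (K4 * z + k3) / k2) y3 (k3 * y3 / (K5 * z))
    z (T2 - z).

Lemma continuity_steady_poly k1 k2 k3 K4 K5 k6 T1 T2 :
  continuity (steady_poly k1 k2 k3 K4 K5 k6 T1 T2).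
Proof. unfold steady_poly. reg. Qed.

Lemma pos_steady_state_of_root k1 k2 k3 K4 K5 k6 T1 T2 z :
  0 < k1 -> 0 < k2 -> 0 < k3 -> 0 < K4 -> 0 < K5 -> 0 < k6 ->
  0 < z < T2 -> steady_poly k1 k2 k3 K4 K5 k6 T1 T2 z = 0 ->
  pos_steady_state k1 k2 k3 K4 K5 k6 T1 T2 (steady_state_of_x5 k1 k2 k3 K4 K5 k6 T2 z).
Proof.
  intros h1 h2 h3 h4 h5 h6 [hz hzT] hP.
  unfold pos_steady_state, steady_state_of_x5, f1, f2, f3, f4, f5, f6; simpl.
  assert (hD : 0 < K4 * z + k3) by nra.
  assert (hy : 0 < k6 * (T2 - z) / (K4 * z + k3)) by (apply Rdiv_lt_0_compat; nra).
  set (y := k6 * (T2 - z) / (K4 * z + k3)) in *.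
  assert (hyD : y * (K4 * z + k3) = k6 * (T2 - z)) by (unfold y; field; lra).
  repeat split; try (apply Rdiv_lt_0_compat); try nra; try lra.
  - apply Rmult_lt_0_compat; [apply Rmult_lt_0_compat|]; assumption.
  - field; lra.
  - field; lra.
  - field; lra.
  - field; lra.
  - rewrite <- hyD. field. lra.
  - rewrite <- hyD. field. lra.
  - apply (Rmult_eq_reg_r (z * (K4 * z + k3))); [|nra].
    unfold steady_poly in hP.
    transitivity
      (y * (K4 * z + k3) * (K4 * (/ k1 + / k2) * z ^ 2 + (k3 / k2 + 1) * z + k3 / K5)).
    + field; lra.
    + rewrite hyD. lra.
Qed.

Lemma root_between (f : R -> R) (a b : R) :
  continuity f -> a < b -> f a * f b < 0 -> exists z, a < z < b /\ f z = 0.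
Proof.
  intros hf hab hsign.
  assert (hroot : exists z, a <= z <= b /\ f z = 0).
  { destruct (Rlt_or_le (f a) 0) as [ha | ha].
    - assert (hb : 0 < f b) by nra.
      destruct (IVT f a b hf hab ha hb) as [z hz]. eauto.
    - assert (hf' : continuity (fun x => - f x)) by (intro; apply continuity_pt_opp, hf).
      assert (hb' : 0 < - f b) by nra.
      assert (ha' : - f a < 0) by nra.
      destruct (IVT (fun x => - f x) a b hf' hab ha' hb') as [z [hz hfz]].
      exists z. split; [exact hz | lra]. }
  destruct hroot as [z [[hz1 hz2] hfz]].
  exists z. split; [split | exact hfz].
  - destruct hz1 as [? | <-]; [assumption | nra].
  - destruct hz2 as [? | ->]; [assumption | nra].
Qed.

Section Window.

Variables k1 k2 k3 k6 T1 T2 : R.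
Hypotheses (h1 : 0 < k1) (h2 : 0 < k2) (h3 : 0 < k3) (h6 : 0 < k6)
  (hT1 : 0 < T1) (hT2 : 0 < T2).

Let alpha := / k1 + / k2.
Let gamma := / k2 + / k3.
(* c1 > 0 and c2 > 0 say that T1 / T2 lies strictly inside the window
   (k6 gamma, k6 alpha). *)
Let c1 := k6 * T2 * alpha - T1.
Let c2 := T1 - k6 * T2 * gamma.
(* At b the factor c1 - k6 alpha z of steady_poly_ge equals c1 / 2. *)
Let b := c1 / (2 * k6 * alpha).
Let kappa := 2 * k3 * (c2 + k6 * gamma * b) / (b * c1).
Let rho := k3 * c2 ^ 2 / (4 * c1 * k6 * T2).

Lemma alpha_gt0 : 0 < alpha.
Proof. unfold alpha. apply Rplus_lt_0_compat; apply Rinv_0_lt_compat; assumption. Qed.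

Lemma gamma_gt0 : 0 < gamma.
Proof. unfold gamma. apply Rplus_lt_0_compat; apply Rinv_0_lt_compat; assumption. Qed.

Lemma mid_lt_T2 : b < T2.
Proof.
  pose proof alpha_gt0.
  apply (Rmult_lt_reg_r (2 * k6 * alpha)); [nra|].
  unfold b. field_simplify; [|lra]. unfold c1.
  assert (0 < k6 * T2 * alpha) by (repeat apply Rmult_lt_0_compat; assumption).
  lra.
Qed.

Section Rates.

Variables K4 K5 : R.
Hypotheses (hK4 : 0 < K4) (hK5 : 0 < K5).

Local Notation P := (steady_poly k1 k2 k3 K4 K5 k6 T1 T2).

Lemma steady_poly_split z :
  P z = K4 * z ^ 2 * (c1 - k6 * alpha * z) - k3 * z * (c2 + k6 * gamma * z)
        + k6 * k3 * (T2 - z) / K5.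
Proof. unfold steady_poly, c1, c2, alpha, gamma. field. lra. Qed.

Lemma steady_poly_0_gt0 : 0 < P 0.
Proof.
  replace (P 0) with (k6 * T2 * (k3 / K5)) by (unfold steady_poly; ring).
  apply Rmult_lt_0_compat; [nra | apply Rdiv_lt_0_compat; lra].
Qed.

Lemma steady_poly_T2_lt0 : P T2 < 0.
Proof.
  unfold steady_poly.
  assert (0 < T1 * (K4 * T2 + k3) * T2) by (repeat apply Rmult_lt_0_compat; nra).
  replace (T2 - T2) with 0 by ring. nra.
Qed.

Lemma steady_poly_le z :
  0 <= z -> P z <= K4 * c1 * z ^ 2 - k3 * c2 * z + k6 * k3 * T2 / K5.
Proof.
  intro hz. rewrite steady_poly_split.
  pose proof alpha_gt0. pose proof gamma_gt0.
  assert (0 <= K4 * z ^ 2 * (k6 * alpha * z))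
    by (repeat apply Rmult_le_pos; try lra; apply pow2_ge_0).
  assert (0 <= k3 * z * (k6 * gamma * z)) by (repeat apply Rmult_le_pos; lra).
  assert (k6 * k3 * (T2 - z) / K5 <= k6 * k3 * T2 / K5).
  { apply Rmult_le_compat_r; [left; apply Rinv_0_lt_compat; lra|].
    apply Rmult_le_compat_l; [nra | lra]. }
  nra.
Qed.

Lemma steady_poly_ge z :
  z <= T2 -> K4 * z ^ 2 * (c1 - k6 * alpha * z) - k3 * z * (c2 + k6 * gamma * z) <= P z.
Proof.
  intro hz. rewrite steady_poly_split.
  assert (0 <= k6 * k3 * (T2 - z) / K5).
  { apply Rmult_le_pos; [apply Rmult_le_pos; nra | left; apply Rinv_0_lt_compat; lra]. }
  lra.
Qed.

(* k3 c2 / (2 c1 K4) minimises the quadratic bound of steady_poly_le. *)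
Lemma steady_poly_vertex_lt0 :
  0 < c1 -> 0 < c2 -> K4 / K5 < rho -> P (k3 * c2 / (2 * c1 * K4)) < 0.
Proof.
  intros hc1 hc2 hratio.
  eapply Rle_lt_trans.
  { apply steady_poly_le. left. apply Rdiv_lt_0_compat; nra. }
  replace (K4 * c1 * (k3 * c2 / (2 * c1 * K4)) ^ 2 - k3 * c2 * (k3 * c2 / (2 * c1 * K4))
           + k6 * k3 * T2 / K5)
    with (k6 * k3 * T2 / K4 * (K4 / K5 - rho))
    by (unfold rho; field; repeat split; lra).
  assert (0 < k6 * k3 * T2 / K4)
    by (apply Rdiv_lt_0_compat; [repeat apply Rmult_lt_0_compat|]; lra).
  nra.
Qed.

Lemma steady_poly_mid_gt0 : 0 < c1 -> kappa < K4 -> 0 < P b.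
Proof.
  intros hc1 hK4large.
  pose proof alpha_gt0.
  assert (hb : 0 < b) by (apply Rdiv_lt_0_compat; nra).
  eapply Rlt_le_trans; [|apply steady_poly_ge; left; apply mid_lt_T2].
  replace (K4 * b ^ 2 * (c1 - k6 * alpha * b) - k3 * b * (c2 + k6 * gamma * b))
    with (b ^ 2 * c1 / 2 * (K4 - kappa))
    by (unfold kappa, b; field; repeat split; lra).
  assert (0 < b ^ 2 * c1 / 2)
    by (apply Rdiv_lt_0_compat; [apply Rmult_lt_0_compat; [apply pow_lt|]|]; lra).
  nra.
Qed.

End Rates.

Lemma steady_poly_three_roots :
  k6 * (/ k2 + / k3) < T1 / T2 < k6 * (/ k1 + / k2) ->
  exists kappa rho, 0 < kappa /\ 0 < rho /\
    forall K4 K5, 0 < K4 -> 0 < K5 -> kappa < K4 -> K4 / K5 < rho ->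
    exists z1 z2 z3, 0 < z1 < z2 /\ z2 < z3 < T2 /\
      steady_poly k1 k2 k3 K4 K5 k6 T1 T2 z1 = 0 /\
      steady_poly k1 k2 k3 K4 K5 k6 T1 T2 z2 = 0 /\
      steady_poly k1 k2 k3 K4 K5 k6 T1 T2 z3 = 0.
Proof.
  intros [hlo hhi].
  pose proof alpha_gt0. pose proof gamma_gt0.
  assert (hc1 : 0 < c1).
  { apply (Rmult_lt_compat_r T2) in hhi; [|lra].
    replace (T1 / T2 * T2) with T1 in hhi by (field; lra).
    unfold c1, alpha. lra. }
  assert (hc2 : 0 < c2).
  { apply (Rmult_lt_compat_r T2) in hlo; [|lra].
    replace (T1 / T2 * T2) with T1 in hlo by (field; lra).
    unfold c2, gamma. lra. }
  assert (hb : 0 < b) by (apply Rdiv_lt_0_compat; nra).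
  assert (hgb : 0 < k6 * gamma * b)
    by (apply Rmult_lt_0_compat; [apply Rmult_lt_0_compat|]; assumption).
  exists kappa, rho.
  split; [apply Rdiv_lt_0_compat; nra|].
  split.
  { apply Rdiv_lt_0_compat;
      [apply Rmult_lt_0_compat; [|apply pow_lt] | repeat apply Rmult_lt_0_compat]; lra. }
  intros K4 K5 hK4 hK5 hK4large hratio.
  set (a := k3 * c2 / (2 * c1 * K4)).
  assert (ha : 0 < a) by (apply Rdiv_lt_0_compat; nra).
  assert (hab : a < b).
  { apply (Rmult_lt_compat_r (b * c1)) in hK4large; [|nra].
    replace (kappa * (b * c1)) with (2 * k3 * (c2 + k6 * gamma * b)) in hK4large
      by (unfold kappa; field; lra).
    apply (Rmult_lt_reg_r (2 * c1 * K4)); [nra|].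
    unfold a. replace (k3 * c2 / (2 * c1 * K4) * (2 * c1 * K4)) with (k3 * c2) by (field; lra).
    nra. }
  set (P := steady_poly k1 k2 k3 K4 K5 k6 T1 T2).
  assert (hP0 : 0 < P 0) by exact (steady_poly_0_gt0 K4 K5 hK5).
  assert (hPa : P a < 0) by exact (steady_poly_vertex_lt0 K4 K5 hK4 hK5 hc1 hc2 hratio).
  assert (hPb : 0 < P b) by exact (steady_poly_mid_gt0 K4 K5 hK5 hc1 hK4large).
  assert (hPT2 : P T2 < 0) by exact (steady_poly_T2_lt0 K4 K5 hK4).
  assert (hcont : continuity P) by apply continuity_steady_poly.
  destruct (root_between P 0 a hcont ha) as [z1 [hz1 hPz1]]; [nra|].
  destruct (root_between P a b hcont hab) as [z2 [hz2 hPz2]]; [nra|].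
  destruct (root_between P b T2 hcont mid_lt_T2) as [z3 [hz3 hPz3]]; [nra|].
  exists z1, z2, z3. repeat split; lra.
Qed.

End Window.

Lemma three_pos_steady_states k1 k2 k3 k6 T1 T2 :
  0 < k1 -> 0 < k2 -> 0 < k3 -> 0 < k6 -> 0 < T1 -> 0 < T2 ->
  k6 * (/ k2 + / k3) < T1 / T2 < k6 * (/ k1 + / k2) ->
  exists kappa rho, 0 < kappa /\ 0 < rho /\
    forall K4 K5, 0 < K4 -> 0 < K5 -> kappa < K4 -> K4 / K5 < rho ->
    exists x y z : state, x <> y /\ x <> z /\ y <> z /\
      pos_steady_state k1 k2 k3 K4 K5 k6 T1 T2 x /\
      pos_steady_state k1 k2 k3 K4 K5 k6 T1 T2 y /\
      pos_steady_state k1 k2 k3 K4 K5 k6 T1 T2 z.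
Proof.
  intros h1 h2 h3 h6 hT1 hT2 hwindow.
  destruct (steady_poly_three_roots k1 k2 k3 k6 T1 T2 h1 h2 h3 h6 hT1 hT2 hwindow)
    as [kappa [rho [hkappa [hrho hroots]]]].
  exists kappa, rho. split; [exact hkappa | split; [exact hrho |]].
  intros K4 K5 hK4 hK5 hK4large hratio.
  destruct (hroots K4 K5 hK4 hK5 hK4large hratio)
    as [z1 [z2 [z3 [[hz1 hz12] [[hz23 hz3] [hP1 [hP2 hP3]]]]]]].
  set (st := steady_state_of_x5 k1 k2 k3 K4 K5 k6 T2).
  assert (hx5 : forall z w, z <> w -> st z <> st w)
    by (intros z w hzw hst; apply hzw; exact (f_equal x5 hst)).
  exists (st z1), (st z2), (st z3).
  do 3 (split; [apply hx5; lra |]).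
  split; [| split]; apply pos_steady_state_of_root; try assumption; lra.
Qed.

Theorem theorem1p1 (k1 k2 k3 k4 k5 k6 : R) :
  0 < k1 -> 0 < k2 -> 0 < k3 -> 0 < k4 -> 0 < k5 -> 0 < k6 ->
  k3 > k1 ->
  k6 * (/ k2 + / k3) < k6 * (/ k1 + / k2) /\
  (forall T1 T2 : R, 0 < T1 -> 0 < T2 ->
     k6 * (/ k2 + / k3) < T1 / T2 < k6 * (/ k1 + / k2) ->
     exists N1 N2 : R, 0 < N1 /\ 0 < N2 /\
       forall b4 b5 : R, 0 < b4 -> 0 < b5 -> b4 > N1 -> b5 / b4 > N2 ->
         exists x y z : state,
           x <> y /\ x <> z /\ y <> z /\
           pos_steady_state k1 k2 k3 (b4 * k4) (b5 * k5) k6 T1 T2 x /\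
           pos_steady_state k1 k2 k3 (b4 * k4) (b5 * k5) k6 T1 T2 y /\
           pos_steady_state k1 k2 k3 (b4 * k4) (b5 * k5) k6 T1 T2 z).
Proof.
  intros h1 h2 h3 h4 h5 h6 h31.
  split.
  { apply Rmult_lt_compat_l; [lra |].
    assert (/ k3 < / k1) by (apply Rinv_lt_contravar; nra).
    lra. }
  intros T1 T2 hT1 hT2 hwindow.
  destruct (three_pos_steady_states k1 k2 k3 k6 T1 T2 h1 h2 h3 h6 hT1 hT2 hwindow)
    as [kappa [rho [hkappa [hrho hsteady]]]].
  exists (kappa / k4), (k4 / (k5 * rho)).
  split; [apply Rdiv_lt_0_compat; lra | split; [apply Rdiv_lt_0_compat; nra |]].
  intros b4 b5 hb4 hb5 hN1 hN2.
  apply hsteady; try nra.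
  - apply (Rmult_lt_compat_r k4) in hN1; [| lra].
    replace (kappa / k4 * k4) with kappa in hN1 by (field; lra). lra.
  - apply (Rmult_lt_compat_r (b4 * k5 * rho)) in hN2; [| repeat apply Rmult_lt_0_compat; lra].
    replace (k4 / (k5 * rho) * (b4 * k5 * rho)) with (b4 * k4) in hN2 by (field; lra).
    apply (Rmult_lt_reg_r (b5 * k5)); [nra |].
    replace (b4 * k4 / (b5 * k5) * (b5 * k5)) with (b4 * k4) by (field; lra).
    replace (b5 / b4 * (b4 * k5 * rho)) with (rho * (b5 * k5)) in hN2 by (field; lra).
    exact hN2.
Qed.
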